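(* For every integer $j\ge 0$: (a) $f^*(3j+2,2)=2j+1+\dfrac{2j+1}{3j+2}$; (b) $f^*(3j+3,2)=2j+2+\dfrac{j+1}{3j+4}$.
   Context: For integers $d\ge 1$, $n\ge 1$, the triangular grid is $T_d(n)=\{(x_1,\dots,x_d)\in\mathbb{Z}_{\ge 0}^d : x_1+\dots+x_d\le n-1\}$. A fractional cover of $T_d(n)$ is an assignment of nonnegative weights $w(H)$ to affine hyperplanes $H$ of $\mathbb{R}^d$ (only finitely many nonzero) such that $\sum_{H\ni p} w(H)\ge 1$ for every $p\in T_d(n)$. $f^*(n,d)$ denotes the minimum of $\sum_H w(H)$ over all fractional covers of $T_d(n)$. *)

From mathcomp Require Import all_boot all_order all_algebra.
From mathcomp Require Import reals.
Set Implicit Arguments. Unset Strict Implicit. Unset Printing Implicit Defensive.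
Import Order.TTheory GRing.Theory Num.Theory.
Local Open Scope ring_scope.

Definition in_grid (d n : nat) (x : 'I_d -> nat) : bool :=
  (\sum_(i < d) x i <= n.-1)%N.

(* An affine hyperplane of R^d is { y : sum_i a_i y_i = b } with a <> 0.
   A weighted hyperplane is a triple ((a, b), w). A fractional cover is a
   finite list of weighted hyperplanes (finitely many nonzero weights;
   repeated hyperplanes simply add their weights). *)
Definition whyp (R : realType) (d : nat) : Type := (('I_d -> R) * R) * R.

Definition whyp_ok (R : realType) (d : nat) (h : whyp R d) : bool :=
  [exists i, h.1.1 i != 0] && (0 <= h.2).

Definition on_hyp (R : realType) (d : nat) (h : whyp R d) (x : 'I_d -> nat) : bool :=
  \sum_(i < d) h.1.1 i * (x i)%:R == h.1.2.

Definition frac_cover (R : realType) (d n : nat) (H : seq (whyp R d)) : Prop :=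
  all (@whyp_ok R d) H /\
  forall x : 'I_d -> nat, in_grid n x ->
    1 <= \sum_(h <- H | on_hyp h x) h.2.

Definition total_weight (R : realType) (d : nat) (H : seq (whyp R d)) : R :=
  \sum_(h <- H) h.2.

Definition fstar_is (R : realType) (n d : nat) (v : R) : Prop :=
  (exists H : seq (whyp R d), frac_cover n H /\ total_weight H = v) /\
  (forall H : seq (whyp R d), frac_cover n H -> v <= total_weight H).

(* Both parts are the cases e = 1, 2 of f^*(3j+e+1, 2) = K + g / D, where
   K = 2j + e, D = 3j + 2e and 2g = K (3 - e).  A point of the triangle has
   barycentric coordinates (a, b, c) with a + b + c = 3j + e.
   Upper bound: the lines at distance a < K from each of the three sides,
   weighted (K - a) / D, cover every point, as (K - a) + (K - b) + (K - c) >= D.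
   Lower bound, by weak LP duality: a symmetric weighting of the points with
   all coordinates at most K, given by a sum of coordinate weights, puts mass
   exactly S = (j+1) D on each line at distance c < K from a side, (j+1) g <= S
   on the line at distance K, and nothing beyond.  Distinct lattice points of
   a line parallel to no side differ by at least 2 in a suitable coordinate,
   so the line meets each class {2k, 2k+1} of that coordinate at most once,
   and the maximal weights of the classes add up to at most S.  Dividing by S
   gives a fractional packing of total mass (K S + (j+1) g) / S = K + g / D. *)

From mathcomp Require Import all_boot all_order all_algebra.
From mathcomp Require Import reals.
From mathcomp Require Import zify ring lra.
Set Implicit Arguments.
Unset Strict Implicit.
Unset Printing Implicit Defensive.

Import Order.TTheory GRing.Theory Num.Theory.
Local Open Scope ring_scope.

Definition vec2 (T : Type) (u v : T) : 'I_2 -> T := fun i => if val i == 0%N then u else v.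

Lemma lift0_ord_max : lift ord0 (ord0 : 'I_1) = ord_max.
Proof. exact: val_inj. Qed.

Lemma in_grid2 n (p : 'I_2 -> nat) : in_grid n p = (p ord0 + p ord_max <= n.-1)%N.
Proof. by rewrite /in_grid !big_ord_recl big_ord0 addn0 lift0_ord_max. Qed.

Lemma on_hyp2 (R : realType) (h : whyp R 2) (p : 'I_2 -> nat) :
  on_hyp h p = (h.1.1 ord0 * (p ord0)%:R + h.1.1 ord_max * (p ord_max)%:R == h.1.2).
Proof. by rewrite /on_hyp !big_ord_recl big_ord0 addr0 lift0_ord_max. Qed.

Lemma frac_cover_weak_duality (R : realType) d n (H : seq (whyp R d))
    (I : finType) (P : pred I) (p : I -> 'I_d -> nat) (u : I -> R) :
  frac_cover n H -> (forall i, P i -> in_grid n (p i)) -> (forall i, 0 <= u i) ->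
  (forall h : whyp R d, whyp_ok h -> \sum_(i | P i && on_hyp h (p i)) u i <= 1) ->
  \sum_(i | P i) u i <= total_weight H.
Proof.
move=> [H_ok H_cov] P_grid u_ge0 u_pack.
apply: (@le_trans _ _ (\sum_(i | P i) \sum_(h <- H)
                          (if on_hyp h (p i) then u i * h.2 else 0))).
  apply: ler_sum => i Pi; rewrite -big_mkcond /= -mulr_sumr.
  by apply: ler_peMr => //; apply/H_cov/P_grid.
rewrite exchange_big /total_weight.
elim: H H_ok {H_cov} => [|h H IH] /=; first by rewrite !big_nil.
case/andP=> h_ok /IH {}IH; rewrite !big_cons lerD //.
rewrite -big_mkcondr /= -mulr_suml ler_piMl //; last exact: u_pack.
by case/andP: h_ok.
Qed.

Lemma natr_mulI (R : numDomainType) (a : R) (x y : nat) :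
  a != 0 -> a * x%:R = a * y%:R -> x = y.
Proof. by move=> /mulfI a_inj /a_inj /eqP; rewrite eqr_nat => /eqP. Qed.

Lemma normr_natrB (R : realDomainType) (u v : nat) :
  `|u%:R - v%:R : R| = (maxn u v - minn u v)%:R.
Proof.
case: (leqP u v) => [uv|/ltnW vu].
  by rewrite distrC -natrB // ger0_norm // (maxn_idPr uv) (minn_idPl uv).
by rewrite -natrB // ger0_norm // (maxn_idPl vu) (minn_idPr vu).
Qed.

Lemma line_points_eq (R : realFieldType) (a0 a1 : R) (xp yp xq yq : nat) :
  a0 != 0 -> `|a0| < `|a1| ->
  a0 * xp%:R + a1 * yp%:R = a0 * xq%:R + a1 * yq%:R ->
  (xp <= xq.+1)%N -> (xq <= xp.+1)%N -> xp = xq /\ yp = yq.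
Proof.
move=> a0_neq0 a01 on_line xp_le xq_le.
case: (eqVneq yp yq) on_line => [<- on_line|yp_neq on_line].
  by split=> //; apply: natr_mulI a0_neq0 (addIr _ on_line).
exfalso; move: a01; apply/negP; rewrite -leNgt.
have dy_ge1 : 1 <= `|yp%:R - yq%:R : R|.
  by rewrite normr_natrB ler1n; move: yp_neq; lia.
have dx_le1 : `|xq%:R - xp%:R : R| <= 1 by rewrite normr_natrB lern1; lia.
have : a1 * (yp%:R - yq%:R) = a0 * (xq%:R - xp%:R) by move: on_line; lra.
move/(congr1 Num.norm); rewrite !normrM => norm_eq.
apply: (le_trans (ler_peMr _ dy_ge1)) => //; rewrite norm_eq.
by apply: ler_piMr.
Qed.

Lemma antidiag_points_eq (R : numDomainType) (a : R) (xp yp xq yq : nat) :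
  a != 0 -> a * xp%:R - a * yp%:R = a * xq%:R - a * yq%:R ->
  (xp + yp <= (xq + yq).+1)%N -> (xq + yq <= (xp + yp).+1)%N -> xp = xq /\ yp = yq.
Proof.
move=> a_neq0; rewrite -!mulrBr => /(mulfI a_neq0) /eqP.
rewrite subr_eq addrAC eq_sym subr_eq -!natrD eqr_nat => /eqP; lia.
Qed.

(* Distinct lattice points of a line parallel to no side of the triangle differ
   by at least 2 in this barycentric coordinate. *)
Definition sep_coord (R : realDomainType) (a0 a1 : R) (N x y : nat) : nat :=
  if `|a0| < `|a1| then x else if `|a1| < `|a0| then y else (N - x - y)%N.

Lemma sep_coord_half_inj (R : realFieldType) (a0 a1 : R) (N xp yp xq yq : nat) :
  a0 != 0 -> a1 != 0 -> a0 != a1 ->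
  a0 * xp%:R + a1 * yp%:R = a0 * xq%:R + a1 * yq%:R ->
  (xp + yp <= N)%N -> (xq + yq <= N)%N ->
  (sep_coord a0 a1 N xp yp %/ 2 = sep_coord a0 a1 N xq yq %/ 2)%N ->
  xp = xq /\ yp = yq.
Proof.
move=> a0_neq0 a1_neq0 a01 on_line p_le q_le; rewrite /sep_coord.
case: ifP => [lt01 half_eq|/negbT ge01].
  by apply: (line_points_eq a0_neq0 lt01 on_line); lia.
case: ifP => [lt10 half_eq|/negbT ge10 half_eq].
  have on_line' : a1 * yp%:R + a0 * xp%:R = a1 * yq%:R + a0 * xq%:R.
    by rewrite addrC on_line addrC.
  by have [] // := line_points_eq a1_neq0 lt10 on_line'; lia.
have : `|a1| == `|a0| by rewrite eq_le !leNgt ge10 ge01.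
rewrite eqr_norm2 eq_sym (negbTE a01) /= => /eqP a1E.
apply: (antidiag_points_eq a0_neq0); try lia.
by move: on_line; rewrite a1E !mulNr.
Qed.

Lemma sum_le_const_key (T : finType) (P Q : pred T) (k F : T -> nat) (B : nat) :
  (forall p, P p -> Q p) -> (forall p q, P p -> P q -> k p = k q) ->
  (forall p, P p -> (\sum_(q | Q q && (k q == k p)) F q <= B)%N) ->
  (\sum_(p | P p) F p <= B)%N.
Proof.
move=> PQ k_const fiber_le; case: (pickP P) => [p0 Pp0|P0]; last by rewrite big_pred0.
apply: leq_trans (fiber_le p0 Pp0).
apply: (sub_le_big leqnn (fun a b => leq_addr b a)) => p Pp.
by rewrite PQ //= (k_const p p0).
Qed.

Section TriangleMass.

Variables (R : realType) (V : nat -> nat -> nat -> nat) (n : nat).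

(* [V] weighs barycentric triples [(a, b, c)], [a + b + c = n - 1]; the grid
   point [(x, y)] is the triple [(x, y, n - 1 - x - y)]. *)
Definition bary_mass (x y : nat) : nat := V x y (n.-1 - x - y).

Definition in_tri (p : 'I_n * 'I_n) : bool := (p.1 + p.2 < n)%N.

Definition row_mass (c : nat) : nat := (\sum_(y < n | c + y < n) bary_mass c y)%N.

Definition line_mass (h : whyp R 2) : nat :=
  (\sum_(p | in_tri p && on_hyp h (vec2 p.1 p.2)) bary_mass p.1 p.2)%N.

Lemma row_mass_nat c : (c < n)%N ->
  row_mass c = (\sum_(0 <= y < n - c) V c y (n.-1 - c - y))%N.
Proof.
move=> c_lt; rewrite /row_mass /bary_mass.
rewrite -(big_mkord (fun y => c + y < n)%N (fun y => V c y (n.-1 - c - y))).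
rewrite (big_nat_widen 0 (n - c) n) ?leq_subr //.
by apply: eq_bigl => y; apply/idP/idP; lia.
Qed.

Lemma sum_bary_mass_rows :
  (\sum_(p | in_tri p) bary_mass p.1 p.2 = \sum_(c < n) row_mass c)%N.
Proof. by rewrite pair_big_dep. Qed.

Lemma row_mass_fiber1 c : (c < n)%N ->
  (\sum_(p | in_tri p && (p.1 == c :> nat)) bary_mass p.1 p.2)%N = row_mass c.
Proof.
move=> c_lt.
transitivity (\sum_(i : 'I_n | i == Ordinal c_lt) \sum_(j : 'I_n | (i + j < n)%N)
                bary_mass i j)%N; last by rewrite big_pred1_eq.
by rewrite pair_big_dep; apply: eq_bigl => p; rewrite andbC.
Qed.

Hypothesis V_swap12 : forall a b c, V a b c = V b a c.
Hypothesis V_swap23 : forall a b c, V a b c = V a c b.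

Lemma row_mass_fiber2 c : (c < n)%N ->
  (\sum_(p | in_tri p && (p.2 == c :> nat)) bary_mass p.1 p.2)%N = row_mass c.
Proof.
move=> c_lt; rewrite -(row_mass_fiber1 c_lt).
rewrite (reindex_inj (h := fun p : 'I_n * 'I_n => (p.2, p.1))); last first.
  by move=> [a b] [a' b'] [-> ->].
apply: eq_big => [p|p _]; first by rewrite /in_tri /= addnC.
by rewrite /bary_mass V_swap12 subnAC.
Qed.

Lemma row_mass_antidiag s : (s < n)%N ->
  (\sum_(p | in_tri p && (p.1 + p.2 == s)%N) bary_mass p.1 p.2)%N = row_mass (n.-1 - s).
Proof.
move=> s_lt.
transitivity (\sum_(i : 'I_n | true) \sum_(j : 'I_n | (i + j < n) && (i + j == s))
                bary_mass i j)%N; first by rewrite pair_big_dep.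
rewrite /row_mass [RHS]big_mkcond /=.
apply: eq_bigr => x _; case: (leqP x s) => [x_le|x_gt]; last first.
  rewrite big_pred0 ?ifF //; first lia.
  by move=> y; apply/negbTE; rewrite /in_tri /=; lia.
have y_lt : (s - x < n)%N by lia.
rewrite ifT; last lia.
rewrite (big_pred1 (Ordinal y_lt)) => [|y]; last first.
  by rewrite /= -val_eqE /=; apply/idP/idP; lia.
rewrite /bary_mass /= V_swap12 V_swap23 V_swap12 V_swap23.
by congr V; lia.
Qed.

Variable S : nat.
Hypothesis row_mass_le : forall c, (c < n)%N -> (row_mass c <= S)%N.

Lemma line_mass_axis_le (h : whyp R 2) :
  [exists i, h.1.1 i != 0] ->
  [|| h.1.1 ord0 == 0, h.1.1 ord_max == 0 | h.1.1 ord0 == h.1.1 ord_max] ->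
  (line_mass h <= S)%N.
Proof.
move=> /existsP[i hi_neq0] axis.
have on_lineE (p : 'I_n * 'I_n) : on_hyp h (vec2 p.1 p.2) ->
    h.1.1 ord0 * (p.1 : nat)%:R + h.1.1 ord_max * (p.2 : nat)%:R = h.1.2.
  by rewrite on_hyp2 => /eqP.
have {}hi_neq0 : (h.1.1 ord0 != 0) || (h.1.1 ord_max != 0).
  have : i = ord0 \/ i = ord_max.
    by case: i {hi_neq0} => [[|[|//]] ?]; [left|right]; apply: val_inj.
  by case=> i_eq; rewrite -i_eq hi_neq0 ?orbT.
rewrite /line_mass; case/or3P: axis => /eqP a_eq.
- have a1_neq0 : h.1.1 ord_max != 0 by rewrite a_eq eqxx in hi_neq0.
  apply: (sum_le_const_key (Q := in_tri) (k := fun p => p.2 : nat)) => [p /andP[]//|p q|p].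
  + move=> /andP[_ /on_lineE p_on] /andP[_ /on_lineE]; rewrite -{}p_on a_eq.
    by rewrite !mul0r !add0r => /(natr_mulI a1_neq0) ->.
  + by move=> _; rewrite row_mass_fiber2 ?row_mass_le.
- have a0_neq0 : h.1.1 ord0 != 0 by rewrite a_eq eqxx orbF in hi_neq0.
  apply: (sum_le_const_key (Q := in_tri) (k := fun p => p.1 : nat)) => [p /andP[]//|p q|p].
  + move=> /andP[_ /on_lineE p_on] /andP[_ /on_lineE]; rewrite -{}p_on a_eq.
    by rewrite !mul0r !addr0 => /(natr_mulI a0_neq0) ->.
  + by move=> _; rewrite row_mass_fiber1 ?row_mass_le.
- have a0_neq0 : h.1.1 ord0 != 0 by rewrite -a_eq orbb in hi_neq0.
  apply: (sum_le_const_key (Q := in_tri) (k := fun p => (p.1 + p.2)%N)) => [p /andP[]//|p q|p].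
  + move=> /andP[_ /on_lineE p_on] /andP[_ /on_lineE]; rewrite -{}p_on -a_eq.
    by rewrite -!mulrDr -!natrD => /(natr_mulI a0_neq0) ->.
  + move=> /andP[p_in _]; rewrite row_mass_antidiag // row_mass_le //.
    by move: p_in; rewrite /in_tri; lia.
Qed.

Variables (K : nat) (W : nat -> nat).
Hypothesis V_supp : forall a b c, (K < a)%N -> V a b c = 0%N.
Hypothesis V_le_W : forall a b c, (a + b + c = n.-1)%N ->
  (a <= K)%N -> (b <= K)%N -> (c <= K)%N -> (V a b c <= W (a %/ 2))%N.
Hypothesis sum_W_le : (\sum_(k < (K %/ 2).+1) W k <= S)%N.

Lemma V_out_supp a b c : ~~ [&& a <= K, b <= K & c <= K]%N -> V a b c = 0%N.
Proof.
case: (leqP a K) => [_|/V_supp//]; case: (leqP b K) => [_|/V_supp]; last by rewrite V_swap12.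
by case: (leqP c K) => [//|/V_supp]; rewrite V_swap23 V_swap12.
Qed.

Lemma V_le_W_perm a b c : (a + b + c = n.-1)%N -> [&& a <= K, b <= K & c <= K]%N ->
  [/\ V a b c <= W (a %/ 2), V a b c <= W (b %/ 2) & V a b c <= W (c %/ 2)]%N.
Proof.
move=> abc /and3P[aK bK cK]; split; first exact: V_le_W.
  by rewrite V_swap12; apply: V_le_W; lia.
by rewrite V_swap23 V_swap12; apply: V_le_W; lia.
Qed.

Lemma line_mass_nonaxis_le (h : whyp R 2) :
  h.1.1 ord0 != 0 -> h.1.1 ord_max != 0 -> h.1.1 ord0 != h.1.1 ord_max ->
  (line_mass h <= S)%N.
Proof.
move=> a0_neq0 a1_neq0 a01.
pose supp (p : 'I_n * 'I_n) := [&& p.1 <= K, p.2 <= K & n.-1 - p.1 - p.2 <= K]%N.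
rewrite /line_mass (bigID supp) /= [X in (_ + X)%N]big1 ?addn0 => [|p /andP[_]]; last first.
  exact: V_out_supp.
pose key (p : 'I_n * 'I_n) := sep_coord (h.1.1 ord0) (h.1.1 ord_max) n.-1 p.1 p.2.
pose A := [set p | [&& in_tri p, on_hyp h (vec2 p.1 p.2) & supp p]].
have key_le p : p \in A -> (key p <= K)%N && (bary_mass p.1 p.2 <= W (key p %/ 2))%N.
  case: p => x y; rewrite inE /in_tri /= => /and3P[xy_lt _ xyz_supp].
  have [] := V_le_W_perm (b := y) _ xyz_supp; first by rewrite /=; lia.
  case/and3P: xyz_supp; rewrite /key /sep_coord /bary_mass /=.
  by do 2?case: ifP => _; move=> *; apply/andP.
pose phi (p : 'I_n * 'I_n) : 'I_(K %/ 2).+1 := inord (key p %/ 2).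
have phiE p : p \in A -> phi p = (key p %/ 2)%N :> nat.
  by move=> /key_le /andP[kK _]; rewrite inordK // ltnS leq_div2r.
apply: (@leq_trans (\sum_(p in A) W (phi p))).
  rewrite [X in (X <= _)%N](eq_bigl (fun p => p \in A)) => [|p]; last by rewrite inE andbA.
  by apply: leq_sum => p pA; rewrite phiE //; case/andP: (key_le p pA).
rewrite -(big_imset W (h := phi)) /=; last first.
  move=> [xp yp] [xq yq] pA qA /(congr1 (@nat_of_ord _)); rewrite !phiE //.
  move: pA qA; rewrite !inE /= => /and3P[p_in p_on _] /and3P[q_in q_on _].
  move=> /(sep_coord_half_inj a0_neq0 a1_neq0 a01) [] //.
  - by move: p_on q_on; rewrite !on_hyp2 /= => /eqP -> /eqP ->.
  - by move: p_in; rewrite /in_tri /=; lia.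
  - by move: q_in; rewrite /in_tri /=; lia.
  by move=> /= /val_inj -> /val_inj ->.
by apply: leq_trans sum_W_le; apply: (sub_le_big leqnn (fun a b => leq_addr b a)).
Qed.

Lemma line_mass_le (h : whyp R 2) : whyp_ok h -> (line_mass h <= S)%N.
Proof.
case/andP=> h_neq0 _.
have [axis|] := boolP [|| h.1.1 ord0 == 0, h.1.1 ord_max == 0 | h.1.1 ord0 == h.1.1 ord_max].
  exact: line_mass_axis_le.
by rewrite !negb_or => /and3P[]; apply: line_mass_nonaxis_le.
Qed.

Lemma frac_cover_weight_ge (H : seq (whyp R 2)) : (0 < S)%N -> frac_cover n H ->
  (\sum_(c < n) row_mass c)%:R / S%:R <= total_weight H.
Proof.
move=> S_gt0 H_cover; rewrite -sum_bary_mass_rows natr_sum mulr_suml.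
apply: (frac_cover_weak_duality (P := in_tri) (p := fun p => vec2 p.1 p.2)
         (u := fun p => (bary_mass p.1 p.2)%:R / S%:R) H_cover) => [p|p|h h_ok].
- by rewrite /in_tri in_grid2 /vec2 /=; lia.
- by rewrite divr_ge0.
rewrite -mulr_suml -natr_sum ler_pdivrMr ?ltr0n // mul1r ler_nat.
exact: line_mass_le.
Qed.

End TriangleMass.

Definition tri_cover (R : realType) (n K D : nat) : seq (whyp R 2) :=
  let w a := (K - a)%:R / D%:R in
  [seq ((vec2 1 0, a%:R), w a) | a <- index_iota 0 K] ++
  [seq ((vec2 0 1, a%:R), w a) | a <- index_iota 0 K] ++
  [seq ((vec2 1 1, (n.-1 - a)%:R), w a) | a <- index_iota 0 K].

Lemma double_sum_sub K : (2 * \sum_(0 <= a < K) (K - a) = K * K.+1)%N.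
Proof.
elim: K => [|K IH]; first by rewrite big_nil.
rewrite big_nat_recl // (eq_big_nat _ _ (F2 := fun a => K - a)%N) => [|a _]; last first.
  by rewrite subSS.
by rewrite mulnDr IH; lia.
Qed.

Lemma total_weight_tri_cover (R : realType) n K D : (0 < D)%N ->
  total_weight (tri_cover R n K D) = 3%:R * (K * K.+1)%:R / (2 * D)%:R.
Proof.
move=> D_gt0; rewrite /total_weight /tri_cover !big_cat !big_map /=.
rewrite -!mulr_suml -natr_sum -(double_sum_sub K) natrM.
have : (D%:R : R) != 0 by rewrite pnatr_eq0 -lt0n.
by move=> D_neq0; field.
Qed.

Lemma tri_cover_frac_cover (R : realType) n K D : (0 < D)%N -> (K < n)%N ->
  (forall x y, (x + y < n)%N -> (D <= (K - x) + (K - y) + (K - (n.-1 - x - y)))%N) ->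
  frac_cover n (tri_cover R n K D).
Proof.
move=> D_gt0 K_lt cover_pt; split.
  rewrite /tri_cover !all_cat !all_map; apply/and3P; split; apply/allP => a _ /=;
    rewrite /whyp_ok divr_ge0 ?ler0n // andbT; apply/existsP.
  - by exists ord0; rewrite /vec2 oner_neq0.
  - by exists ord_max; rewrite /vec2 oner_neq0.
  - by exists ord0; rewrite /vec2 oner_neq0.
move=> p; rewrite in_grid2; set x := p ord0; set y := p ord_max => xy_le.
rewrite /tri_cover !big_cat !big_map /=.
rewrite (eq_bigl (fun a => a == x)) => [|a]; last first.
  by rewrite on_hyp2 /vec2 /= mul1r mul0r addr0 eqr_nat eq_sym.
rewrite [X in _ + (X + _)](eq_bigl (fun a => a == y)) => [|a]; last first.
  by rewrite on_hyp2 /vec2 /= mul1r mul0r add0r eqr_nat eq_sym.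
rewrite [X in _ + (_ + X)]big_nat_cond.
rewrite [X in _ + (_ + X)](eq_bigl (fun a => (0 <= a < K)%N && (a == n.-1 - x - y)%N)) => [|a].
  have weightE t : (if (0 <= t < K)%N then (K - t)%:R / D%:R else 0) = (K - t)%:R / D%:R :> R.
    by case: ltnP => //=; rewrite -subn_eq0 => /eqP ->; rewrite mul0r.
  rewrite -big_nat_cond !big_nat1_eq !weightE -!mulrDl -!natrD.
  rewrite ler_pdivlMr ?ltr0n // mul1r ler_nat addnA cover_pt //.
  by move: xy_le K_lt; lia.
rewrite on_hyp2 /vec2 /= !mul1r -natrD eqr_nat.
by case: ltnP => //= a_lt; apply/eqP/eqP; move: xy_le K_lt; rewrite /x /y; lia.
Qed.

Local Close Scope ring_scope.

Lemma sum_nat_reflect (F : nat -> nat) a b s : s + 1 = a + b ->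
  \sum_(a <= y < b) F (s - y) = \sum_(a <= y < b) F y.
Proof.
by move=> s_eq; rewrite big_nat_rev; apply: eq_big_nat => y y_in; congr F; lia.
Qed.

Lemma double_sum_ramp j e k : e <= 2 ->
  2 * \sum_(0 <= y < k) (3 * (y - j) - e) = (k - j - 1) * (3 * (k - j - 1) + 3 - 2 * e).
Proof.
move=> e_le; elim: k => [|k IH]; first by rewrite big_nil.
by rewrite big_nat_recr //= mulnDr IH; nia.
Qed.

Section DualWeighting.

Variables j e g : nat.
Hypothesis e_range : 0 < e <= 2.
Hypothesis g_def : 2 * g = (2 * j + e) * (3 - e).

Local Notation N := (3 * j + e).
Local Notation K := (2 * j + e).
Local Notation S := ((j + 1) * (3 * j + 2 * e)).

Lemma param_cases : e = 1 /\ g = 2 * j + 1 \/ e = 2 /\ g = j + 1.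
Proof. by move: e_range g_def; case: e => [|[|[|]]] //= _; lia. Qed.

Definition coord_weight (t : nat) : nat := if t == K then g else 3 * (t - j) - e.

Definition dual_weight (a b c : nat) : nat :=
  if [&& a <= K, b <= K & c <= K] then coord_weight a + coord_weight b + coord_weight c
  else 0.

Definition class_bound (k : nat) : nat := if k == j.+1 then g else 3 * j + 2.

Lemma dual_weight_swap12 a b c : dual_weight a b c = dual_weight b a c.
Proof. by rewrite /dual_weight; do 3!case: (_ <= K) => //=; ring. Qed.

Lemma dual_weight_swap23 a b c : dual_weight a b c = dual_weight a c b.
Proof. by rewrite /dual_weight; do 3!case: (_ <= K) => //=; ring. Qed.

Lemma dual_weight_supp a b c : K < a -> dual_weight a b c = 0.
Proof. by rewrite /dual_weight ltnNge => /negbTE ->. Qed.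

Lemma coord_weight_low t : t <= j -> coord_weight t = 0.
Proof. by move=> t_le; rewrite /coord_weight ifF; lia. Qed.

Lemma coord_weight_mid t : t < K -> coord_weight t = 3 * (t - j) - e.
Proof. by move=> t_lt; rewrite /coord_weight ifF; lia. Qed.

Lemma dual_weight_le_class a b c : a + b + c = N -> a <= K -> b <= K -> c <= K ->
  dual_weight a b c <= class_bound (a %/ 2).
Proof.
move=> + aK bK cK; rewrite /dual_weight aK bK cK /= /class_bound /coord_weight.
move: aK bK cK; case: param_cases => [[-> ->]|[-> ->]] *; do 4!case: ifP => /eqP; lia.
Qed.

Lemma sum_class_bound_le : \sum_(k < (K %/ 2).+1) class_bound k <= S.
Proof.
have sum_low : \sum_(k < j.+1) class_bound k = (3 * j + 2) * j.+1.
  rewrite -iter_addn_0 -big_const_ord; apply: eq_bigr => k _.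
  by rewrite /class_bound ifF //; apply/eqP; move: (ltn_ord k); lia.
case: param_cases => [[-> _]|[-> g_eq]].
  by rewrite (_ : (2 * j + 1) %/ 2 = j) ?sum_low; nia.
rewrite (_ : (2 * j + 2) %/ 2 = j.+1); last lia.
by rewrite big_ord_recr /= sum_low /class_bound eqxx g_eq; nia.
Qed.

Lemma dual_weight_in a b c : a <= K -> b <= K -> c <= K ->
  dual_weight a b c = coord_weight a + coord_weight b + coord_weight c.
Proof. by move=> aK bK cK; rewrite /dual_weight aK bK cK. Qed.

Lemma sum_coord_weight : 2 * \sum_(0 <= t < K.+1) coord_weight t = S.
Proof.
rewrite big_nat_recr //= mulnDr.
rewrite (eq_big_nat _ _ (F2 := fun t => 3 * (t - j) - e)) => [|t /andP[_ t_lt]]; last first.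
  exact: coord_weight_mid.
rewrite double_sum_ramp /coord_weight ?eqxx; last lia.
by case: param_cases => [[-> ->]|[-> ->]]; nia.
Qed.

Local Notation row c := (row_mass dual_weight N.+1 c).

Lemma row_mass_low c : c <= j -> row c = S.
Proof.
move=> c_le; rewrite row_mass_nat /=; last lia.
rewrite (@big_cat_nat _ _ _ (j - c)) //=; last lia.
rewrite big1_seq ?add0n => [|y /andP[_]]; last first.
  rewrite mem_index_iota => y_lt.
  by rewrite dual_weight_swap23 dual_weight_swap12 dual_weight_supp //; lia.
rewrite (@big_cat_nat _ _ _ K.+1) //=; [|lia|lia].
rewrite [X in _ + X]big1_seq ?addn0 => [|y /andP[_]]; last first.
  rewrite mem_index_iota => y_lt.
  by rewrite dual_weight_swap12 dual_weight_supp //; lia.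
rewrite (eq_big_nat _ _ (F2 := fun y => coord_weight y + coord_weight (N - c - y)))
  => [|y y_in]; last by rewrite dual_weight_in ?(coord_weight_low c_le) //; lia.
rewrite big_split /= (sum_nat_reflect coord_weight (a := j - c) (b := K.+1)); last lia.
have -> : \sum_(j - c <= y < K.+1) coord_weight y = \sum_(0 <= y < K.+1) coord_weight y.
  rewrite [RHS](@big_cat_nat _ _ _ (j - c)) //=; last lia.
  rewrite [X in _ = X + _]big1_seq // => y /andP[_]; rewrite mem_index_iota => y_lt.
  by apply: coord_weight_low; lia.
by rewrite addnn -mul2n sum_coord_weight.
Qed.

Lemma row_mass_mid c : j < c < K -> row c = S.
Proof.
move=> /andP[j_lt c_lt]; rewrite row_mass_nat /=; last lia.
rewrite (eq_big_nat _ _ (F2 := fun y =>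
            coord_weight c + (3 * (y - j) - e) + (3 * (N - c - y - j) - e)))
  => [|y y_in]; last by rewrite dual_weight_in ?coord_weight_mid //; lia.
rewrite !big_split /= sum_nat_const_nat.
rewrite (sum_nat_reflect (fun t => 3 * (t - j) - e) (a := 0) (b := N.+1 - c)); last lia.
rewrite -addnA addnn -mul2n double_sum_ramp ?coord_weight_mid //; last lia.
by move: j_lt c_lt; case: param_cases => [[-> _]|[-> _]] *; nia.
Qed.

Lemma row_mass_top : row K = j.+1 * g.
Proof.
rewrite row_mass_nat /=; last lia.
rewrite (eq_big_nat _ _ (F2 := fun => g)) => [|y y_in].
  by rewrite sum_nat_const_nat; congr (_ * _); lia.
rewrite dual_weight_in ?(coord_weight_low (t := y)) ?(coord_weight_low (t := N - K - y));
  try lia.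
by rewrite /coord_weight eqxx !addn0.
Qed.

Lemma row_mass_high c : K < c -> row c = 0.
Proof. by move=> K_lt; apply: big1 => y _; apply: dual_weight_supp. Qed.

Lemma row_mass_dual_le c : row c <= S.
Proof.
case: (ltngtP c K) => [c_lt|K_lt|->]; last 2 first.
- by rewrite row_mass_high.
- by rewrite row_mass_top; case: param_cases => [[-> ->]|[-> ->]]; nia.
case: (leqP c j) => [c_le|j_lt]; first by rewrite row_mass_low.
by rewrite row_mass_mid ?j_lt.
Qed.

Lemma sum_row_mass_dual : \sum_(c < N.+1) row c = K * S + j.+1 * g.
Proof.
rewrite -(big_mkord xpredT) (@big_cat_nat _ _ _ K) //=; last lia.
rewrite big_nat_recl; last lia.
rewrite row_mass_top [X in _ + (_ + X)]big1_seq ?addn0 => [|c /andP[_]]; last first.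
  by rewrite mem_index_iota => c_in; apply: row_mass_high; lia.
rewrite (eq_big_nat _ _ (F2 := fun => S)) ?sum_nat_const_nat ?subn0 // => c /andP[_ c_lt].
by case: (leqP c j) => [c_le|j_lt]; [rewrite row_mass_low | rewrite row_mass_mid ?j_lt].
Qed.

End DualWeighting.

Local Open Scope ring_scope.

Lemma natr_frac_split (R : numFieldType) (K D g m : nat) : (0 < D)%N -> (0 < m)%N ->
  (K * (m * D) + m * g)%:R / (m * D)%:R = K%:R + g%:R / D%:R :> R.
Proof.
move=> D_gt0 m_gt0; have [D_neq0 m_neq0] : (D%:R : R) != 0 /\ (m%:R : R) != 0.
  by rewrite !pnatr_eq0 -!lt0n.
by rewrite natrD !natrM; field; apply/andP.
Qed.

Theorem fstar_triangle (R : realType) (j e g : nat) :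
  (0 < e <= 2)%N -> (2 * g = (2 * j + e) * (3 - e))%N ->
  fstar_is (3 * j + e).+1 2 ((2 * j + e)%N%:R + g%:R / (3 * j + 2 * e)%N%:R : R).
Proof.
move=> e_range g_def; split.
  exists (tri_cover R (3 * j + e).+1 (2 * j + e) (3 * j + 2 * e)); split.
    by apply: tri_cover_frac_cover => [||x y xy_lt] /=; lia.
  rewrite total_weight_tri_cover -?natrM; last lia.
  rewrite -(@natr_frac_split R (2 * j + e) (3 * j + 2 * e) g 2) //; last lia.
  by congr (_%:R / _); rewrite g_def; nia.
move=> H H_cover.
have := frac_cover_weight_ge (dual_weight_swap12 j e g) (dual_weight_swap23 j e g)
  (fun c _ => row_mass_dual_le e_range g_def c) (@dual_weight_supp j e g)
  (dual_weight_le_class e_range g_def) (sum_class_bound_le e_range g_def) _ H_cover.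
rewrite sum_row_mass_dual // addn1 natr_frac_split //; last lia.
by apply; lia.
Qed.

Theorem mainTheorem2 (R : realType) (j : nat) :
  fstar_is (3 * j + 2) 2
    ((2 * j + 1)%:R + (2 * j + 1)%:R / (3 * j + 2)%:R : R) /\
  fstar_is (3 * j + 3) 2
    ((2 * j + 2)%:R + (j + 1)%:R / (3 * j + 4)%:R : R).
Proof.
split.
  have := @fstar_triangle R j 1 (2 * j + 1) isT ltac:(lia).
  by rewrite -addn1 -addnA muln1.
have := @fstar_triangle R j 2 (j + 1) isT ltac:(lia).
by rewrite -addn1 -addnA.
Qed.
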